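(* Let $\theta>0$ and $1\le p,q<\infty$, and let $p'$ be the conjugate exponent of $p$ ($\frac1p+\frac1{p'}=1$). If $g\in l^{q),\theta}(L^p)$ and $f\in l^{q)',\theta}(L^{p'})$, then $gf\in L^1(\mathbb R)$ and $$\int_{\mathbb R}|g(x)f(x)|\,dx\le\|g\|_{p,q),\theta}\,\|f\|_{p',q)',\theta}.$$
   Context: Here the index set is $\mathbb Z$ and $I_k=[k,k+1)$, so functions are defined on $\mathbb R=\bigcup_{k\in\mathbb Z}I_k$. The space $l^{q),\theta}(L^p)$ consists of complex-valued measurable $g$ on $\mathbb R$ with $g\chi_{I_k}\in L^p$ for all $k$ and $\|g\|_{p,q),\theta}:=\sup_{\varepsilon>0}\Big(\varepsilon^{\theta}\sum_{k\in\mathbb Z}\big(\int_{I_k}|g|^p\big)^{\frac{q(1+\varepsilon)}{p}}\Big)^{\frac{1}{q(1+\varepsilon)}}<\infty$. The small Lebesgue sequence space $l^{q)',\theta}$ consists of sequences $y=\{y_k\}_{k\in\mathbb Z}$ with $$\|y\|_{l^{q)',\theta}}:=\inf\Big\{\sum_{j\in\mathbb Z}\inf_{\varepsilon>0}\varepsilon^{\frac{-\theta}{q(1+\varepsilon)}}\Big(\sum_{k\in\mathbb Z}y_{k,j}^{(q(1+\varepsilon))'}\Big)^{\frac{1}{(q(1+\varepsilon))'}}\Big\}<\infty,$$ the outer infimum over all decompositions $|y_k|=\sum_{j\in\mathbb Z}y_{k,j}$ with $y_{k,j}\ge0$, and $(q(1+\varepsilon))'$ the conjugate exponent of $q(1+\varepsilon)$.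 For $1\le r\le\infty$, the auxiliary space $l^{q)',\theta}(L^{r})$ consists of complex-valued measurable $f$ on $\mathbb R$ with $f\chi_{I_k}\in L^{r}$ for all $k$ and $\|f\|_{r,q)',\theta}:=\big\|\{\|f\chi_{I_k}\|_{L^{r}}\}_{k\in\mathbb Z}\big\|_{l^{q)',\theta}}<\infty$ (with $L^\infty$ when $p=1$, $p'=\infty$). *)

From HB Require Import structures.
From mathcomp Require Import all_boot all_order all_algebra.
From mathcomp Require Import all_classical all_reals all_analysis.
From mathcomp Require Import complex.
Set Implicit Arguments. Unset Strict Implicit. Unset Printing Implicit Defensive.
Import Order.TTheory GRing.Theory Num.Theory.
Import numFieldNormedType.Exports.
Local Open Scope classical_set_scope.
Local Open Scope ring_scope.

Notation leb := (@completed_lebesgue_measure _).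

Definition cabs (R : realType) (z : R[i]) : R := Normc.normc z.

(* R with the sigma-algebra of Lebesgue-measurable sets *)
Definition LebR (R : realType) :=
  caratheodory_type ((@wlength R idfun)^*)%mu.

Definition cmeasurable (R : realType) (g : R -> R[i]) : Prop :=
  measurable_fun [set: LebR R] (fun x : LebR R => complex.Re (g x)) /\
  measurable_fun [set: LebR R] (fun x : LebR R => complex.Im (g x)).

Definition lebL (R : realType) : {measure set (LebR R) -> \bar R} :=
  @completed_lebesgue_measure R.

Definition Ik (R : realType) (k : int) : set R :=
  [set x : R | k%:~R <= x < k%:~R + 1].

(* ||g chi_{I_k}||_{L^r}, for r : \bar R (r = +oo gives the ess sup) *)
Definition blocknorm (R : realType) (r : \bar R) (g : R -> R[i]) (k : int)
  : \bar R :=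
  Lnorm (lebL R) r (fun x : LebR R => ((\1_(Ik k) x : R) * cabs (g x))%:E).

Definition conjR (R : realType) (r : R) : R := r / (r - 1).

Definition conj_exp (R : realType) (p : R) : \bar R :=
  if p == 1 then +oo%E else (conjR p)%:E.

Local Open Scope ereal_scope.

Definition grand_norm (R : realType) (theta p q : R) (g : R -> R[i]) : \bar R :=
  ereal_sup [set ((eps `^ theta)%:E *
                  \esum_(k in [set: int]) (blocknorm p%:E g k `^ (q * (1 + eps))))
                 `^ (q * (1 + eps))^-1
            | eps in [set eps : R | (0 < eps)%R]].

Definition small_inner (R : realType) (theta q : R) (z : int -> R) : \bar R :=
  ereal_inf [set ((eps `^ (- theta / (q * (1 + eps))))%:E *
                  (\esum_(k in [set: int]) ((z k `^ conjR (q * (1 + eps)))%:E))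
                   `^ (conjR (q * (1 + eps)))^-1)
            | eps in [set eps : R | (0 < eps)%R]].

Definition small_decomp (R : realType) (y : int -> R) : set (int -> int -> R) :=
  [set D | (forall k j, (0 <= D k j)%R) /\
           (forall k, \esum_(j in [set: int]) (D k j)%:E = `|y k|%:E)].

Definition small_norm (R : realType) (theta q : R) (y : int -> R) : \bar R :=
  ereal_inf [set \esum_(j in [set: int]) small_inner theta q (fun k => D k j)
            | D in small_decomp y].

Definition small_Lnorm (R : realType) (theta q : R) (r : \bar R)
  (f : R -> R[i]) : \bar R :=
  small_norm theta q (fun k => fine (blocknorm r f k)).

Definition in_grand (R : realType) (theta p q : R) (g : R -> R[i]) : Prop :=
  [/\ cmeasurable g, (forall k, blocknorm p%:E g k < +oo)
    & grand_norm theta p q g < +oo].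

Definition in_small (R : realType) (theta q : R) (r : \bar R) (f : R -> R[i])
  : Prop :=
  [/\ cmeasurable f, (forall k, blocknorm r f k < +oo)
    & small_Lnorm theta q r f < +oo].

(* Split the integral over the unit intervals I_k and apply Hoelder on each
   of them (in its L^1-L^oo form when p = 1): with a_k = ||g 1_{I_k}||_p and
   b_k = ||f 1_{I_k}||_p', the integral of |gf| is at most sum_k a_k b_k.
   Given a decomposition b_k = sum_j y_{k,j}, a column j and eps > 0, put
   s = q(1+eps); discrete Hoelder with the weight eps^theta split as
   eps^(theta/s) * eps^(-theta/s) gives
     sum_k a_k y_{k,j} <= (eps^theta sum_k a_k^s)^(1/s)
                          * eps^(-theta/s) (sum_k y_{k,j}^s')^(1/s'),
   and the first factor is at most ||g||_{p,q),theta}.  Taking the infimum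
   over eps, summing over j and taking the infimum over decompositions gives
   the bound, whose finiteness yields integrability. *)

From mathcomp Require Import all_boot all_order all_algebra.
From mathcomp Require Import all_classical all_reals all_analysis.
From mathcomp Require Import complex.
From mathcomp Require Import measurable_realfun lebesgue_integral ess_sup_inf.
From mathcomp Require Import ring.
Set Implicit Arguments.
Unset Strict Implicit.
Unset Printing Implicit Defensive.
Import Order.TTheory GRing.Theory Num.Theory.
Local Open Scope classical_set_scope.
Local Open Scope ring_scope.

(* 0, -1, 1, -2, 2, ...: [Negz m] is [-(m + 1)]. *)
Definition int_of_nat (n : nat) : int :=
  if odd n then Negz n./2 else Posz n./2.

Lemma int_of_nat_inj : injective int_of_nat.
Proof.
move=> m n; rewrite /int_of_nat.
case om: (odd m); case on: (odd n) => //= -[] h;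
  by rewrite -(odd_double_half m) -(odd_double_half n) om on h.
Qed.

Lemma int_of_nat_surj (k : int) : exists n, int_of_nat n = k.
Proof.
case: k => m.
- by exists m.*2; rewrite /int_of_nat odd_double doubleK.
- exists m.*2.+1; rewrite /int_of_nat /= odd_double /=.
  by congr Negz; exact: uphalf_double.
Qed.

Section ereal_facts.
Context {R : realType}.
Local Open Scope ereal_scope.

Lemma esumZl (T : choiceType) (I : set T) (c : R) (a : T -> \bar R) :
  (0 <= c)%R -> (forall i, 0 <= a i) ->
  \esum_(i in I) (c%:E * a i) = c%:E * \esum_(i in I) a i.
Proof.
move=> c0 a0; rewrite /esum -ereal_supZl //; last first.
  apply/set0P; exists 0; exists set0; first exact: fsets_set0.
  by rewrite fsbig_set0.
rewrite image_comp; congr ereal_sup; apply: eq_imagel => A _ /=.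
by rewrite ge0_mule_fsumr.
Qed.

Lemma esum_swap (T T' : choiceType) (I : set T) (J : set T')
    (a : T -> T' -> \bar R) : (forall i j, 0 <= a i j) ->
  \esum_(i in I) \esum_(j in J) a i j = \esum_(j in J) \esum_(i in I) a i j.
Proof.
move=> a0; rewrite !esum_esum //.
rewrite (reindex_esum (I `*` J) (J `*` I) (fun x => (x.2, x.1))) //.
split.
- by move=> [i j] [/= Ii Jj].
- by move=> [i j] [i' j'] _ _ /= [-> ->].
- by move=> [j i] [/= Jj Ii]; exists (i, j).
Qed.

Lemma esum_int (a : int -> \bar R) : (forall k, 0 <= a k) ->
  \esum_(k in [set: int]) a k = \sum_(n <oo) a (int_of_nat n).
Proof.
move=> a0; rewrite nneseries_esumT // -(esum_image _ int_of_nat); last first.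
  by move=> m n _ _; exact: int_of_nat_inj.
congr esum; apply/seteqP; split => // k _.
by have [n <-] := int_of_nat_surj k; exists n.
Qed.

Lemma le_mul_ereal_inf (L G : \bar R) (S : set (\bar R)) :
  0 <= G -> G < +oo -> S !=set0 -> (forall x, S x -> L <= G * x) ->
  L <= G * ereal_inf S.
Proof.
move=> G0 Gfin [x0 Sx0] LS.
have Gfin' : G \is a fin_num by rewrite ge0_fin_numE.
rewrite -(fineK Gfin') in LS *.
have [G_eq0|G_neq0] := eqVneq (fine G) 0%R.
  by have := LS _ Sx0; rewrite G_eq0 !mul0e.
have G_gt0 : (0 < fine G)%R by rewrite lt0r G_neq0 fine_ge0.
rewrite -lee_pdivrMl //; apply/ereal_infP => x Sx.
by rewrite lee_pdivrMl //; exact: LS.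
Qed.

End ereal_facts.

Section unit_intervals.
Context {R : realType}.
Local Open Scope ereal_scope.

Lemma measurable_Ik k : measurable (Ik k : set (LebR R)).
Proof.
apply: sub_caratheodory.
rewrite (_ : Ik k = [set` `[(k%:~R : R), (k%:~R + 1)%R[]).
  exact: measurable_itv.
by rewrite predeqE => x /=; rewrite in_itv.
Qed.

Lemma Ik_floor (x : R) k : Ik k x -> k = Num.floor x.
Proof. by move=> /= h; apply/esym/floor_def; rewrite intrD. Qed.

Lemma bigcup_Ik :
  \bigcup_n (Ik (int_of_nat n) : set (LebR R)) = [set: LebR R].
Proof.
apply/seteqP; split => // x _.
have [n en] := int_of_nat_surj (Num.floor (x : R)).
by exists n => //; rewrite en /=; have := floor_itv (x : R); rewrite intrD.
Qed.

Lemma integral_sum_Ik (h : LebR R -> \bar R) :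
  measurable_fun [set: LebR R] h -> (forall x : LebR R, 0 <= h x) ->
  \int[lebL R]_(x in [set: LebR R]) h x =
  \esum_(k in [set: int]) \int[lebL R]_(x in (Ik k : set (LebR R))) h x.
Proof.
move=> mh h0; rewrite esum_int; last by move=> k; apply: integral_ge0.
rewrite -bigcup_Ik ge0_integral_bigcup //.
- by move=> k; apply: measurable_Ik.
- by rewrite bigcup_Ik.
- move=> i j _ _ [x [/Ik_floor hi /Ik_floor hj]].
  by apply: int_of_nat_inj; rewrite hi hj.
Qed.

End unit_intervals.

Section complex_modulus.
Context {R : realType}.

Lemma cabsE (z : R[i]) :
  cabs z = Num.sqrt (complex.Re z ^+ 2 + complex.Im z ^+ 2).
Proof. by case: z. Qed.

Lemma cabs_ge0 (z : R[i]) : 0 <= cabs z.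
Proof. by rewrite cabsE sqrtr_ge0. Qed.

Lemma cabsM (z w : R[i]) : cabs (z * w) = cabs z * cabs w.
Proof. exact: Normc.normcM. Qed.

Lemma measurable_cabs (g : R -> R[i]) : cmeasurable g ->
  measurable_fun [set: LebR R] (fun x : LebR R => cabs (g x)).
Proof.
move=> [mr mi]; have sqrtC := @sqrt_continuous R.
rewrite (_ : (fun x => _) = Num.sqrt \o
    (fun x : LebR R => complex.Re (g x) ^+ 2 + complex.Im (g x) ^+ 2)).
  apply: measurableT_comp; first exact: continuous_measurable_fun sqrtC.
  by apply: measurable_funD; apply: measurable_funX.
by apply/funext => x; rewrite /= cabsE.
Qed.

Lemma cmeasurableM (g f : R -> R[i]) : cmeasurable g -> cmeasurable f ->
  cmeasurable (fun x => g x * f x).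
Proof.
move=> [gr gi] [fr fi]; split.
- rewrite (_ : (fun x => _) = (fun x : LebR R =>
      complex.Re (g x) * complex.Re (f x) -
      complex.Im (g x) * complex.Im (f x))).
    by apply: measurable_funB; apply: measurable_funM.
  by apply/funext => x; case: (g x) => a b; case: (f x) => c d.
- rewrite (_ : (fun x => _) = (fun x : LebR R =>
      complex.Re (g x) * complex.Im (f x) +
      complex.Im (g x) * complex.Re (f x))).
    by apply: measurable_funD; apply: measurable_funM.
  by apply/funext => x; case: (g x) => a b; case: (f x) => c d.
Qed.

End complex_modulus.

Section hoelder_one_infty.
Context d (T : measurableType d) {R : realType}.
Variable mu : {measure set T -> \bar R}.
Local Open Scope ereal_scope.

Lemma hoelder1y (f g : T -> R) :
  measurable_fun [set: T] f -> measurable_fun [set: T] g ->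
  0 < mu [set: T] ->
  Lnorm mu 1 (EFin \o (f \* g)%R) <=
  Lnorm mu 1 (EFin \o f) * Lnorm mu +oo (EFin \o g).
Proof.
move=> mf mg mu0; set M := Lnorm mu +oo (EFin \o g).
have g_le_M : \forall x \ae mu, `|(g x)%:E| <= M.
  by rewrite /M Lnorm.unlock mu0; exact: ess_sup_ge.
have mabsf : measurable_fun [set: T] (fun x => `|(f x)%:E|).
  by apply: measurableT_comp => //; apply/measurable_EFinP.
rewrite !Lnorm1 -ge0_integralZr //; last exact: Lnorm_ge0.
apply: ae_ge0_le_integral => //.
- apply: measurableT_comp => //; apply/measurable_EFinP.
  exact: measurable_funM.
- by move=> x _; rewrite mule_ge0 // Lnorm_ge0.
- exact: emeasurable_funM.
apply: filterS g_le_M => x gx _.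
by rewrite /= normrM EFinM lee_wpmul2l.
Qed.

End hoelder_one_infty.

Section conjugate_exponent.
Context {R : realType}.

Lemma conjR_gt0 (s : R) : 1 < s -> 0 < conjR s.
Proof. by move=> s1; rewrite divr_gt0 ?subr_gt0 // (lt_trans ltr01). Qed.

Lemma invr_add_invr_conjR (s : R) : 1 < s -> s^-1 + (conjR s)^-1 = 1.
Proof.
by move=> s1; rewrite invf_div; field; rewrite gt_eqF // (lt_trans ltr01).
Qed.

End conjugate_exponent.

Section blocks.
Context {R : realType}.
Local Open Scope ereal_scope.

(* [blocknorm r g k] is by definition [Lnorm (lebL R) r (EFin \o block g k)]. *)
Definition block (g : R -> R[i]) (k : int) (x : LebR R) : R :=
  \1_(Ik k) x * cabs (g x).

Lemma measurable_block g k :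
  cmeasurable g -> measurable_fun [set: LebR R] (block g k).
Proof.
move=> mg; apply: measurable_funM; last exact: measurable_cabs.
exact/measurable_indic/measurable_Ik.
Qed.

Lemma lebL_setT_gt0 : 0 < lebL R [set: LebR R].
Proof.
apply: (@lt_le_trans _ _ (lebL R (Ik 0%Z))); last first.
  by apply: le_measure; rewrite ?inE //; exact: measurable_Ik.
rewrite (_ : Ik 0%Z = [set` `[0%R, 1%R[] :> set R).
  by rewrite [lebL R _]lebesgue_measure_itv /= lte_fin ltr01 /= sube0 lte01.
by rewrite predeqE => x; rewrite /Ik /= in_itv /= add0r.
Qed.

Lemma integral_Ik_cabsM (g f : R -> R[i]) k :
  \int[lebL R]_(x in (Ik k : set (LebR R))) (cabs (g x * f x))%:E =
  Lnorm (lebL R) 1 (EFin \o (block g k \* block f k)%R).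
Proof.
rewrite Lnorm1 [LHS]integral_mkcond; apply: eq_integral => x _.
rewrite patchE /block /= !indicE; case: (x \in _) => /=.
  by rewrite !mul1r cabsM ger0_norm // mulr_ge0 // cabs_ge0.
by rewrite !mul0r normr0.
Qed.

Lemma integral_Ik_le_blocknorm (g f : R -> R[i]) (p : R) k :
  cmeasurable g -> cmeasurable f -> (1 <= p)%R ->
  \int[lebL R]_(x in (Ik k : set (LebR R))) (cabs (g x * f x))%:E <=
  blocknorm p%:E g k * blocknorm (conj_exp p) f k.
Proof.
move=> mg mf p1; rewrite integral_Ik_cabsM /conj_exp.
have [->|pn1] := eqVneq p 1%R; rewrite ?eqxx.
  exact (hoelder1y (measurable_block k mg) (measurable_block k mf)
    lebL_setT_gt0).
have p1' : (1 < p)%R by rewrite lt_neqAle eq_sym pn1.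
exact (hoelder (lebL R) (measurable_block k mg) (measurable_block k mf)
  (lt_trans ltr01 p1') (conjR_gt0 p1') (invr_add_invr_conjR p1')).
Qed.

End blocks.

Section grand_small_hoelder.
Context {R : realType}.
Local Open Scope ereal_scope.

Lemma esum_hoelder (s : R) (a z : int -> R) : (1 < s)%R ->
  (forall k, 0 <= a k)%R -> (forall k, 0 <= z k)%R ->
  \esum_(k in [set: int]) (a k * z k)%:E <=
  (\esum_(k in [set: int]) (a k `^ s)%:E) `^ s^-1 *
  (\esum_(k in [set: int]) (z k `^ conjR s)%:E) `^ (conjR s)^-1.
Proof.
move=> s1 a0 z0.
pose A n := a (int_of_nat n); pose Z n := z (int_of_nat n).
have mA : measurable_fun [set: nat] A by [].
have mZ : measurable_fun [set: nat] Z by [].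
have := hoelder counting mA mZ (lt_trans ltr01 s1) (conjR_gt0 s1)
  (invr_add_invr_conjR s1).
rewrite !Lnorm_counting ?ltr01 ?conjR_gt0 ?(lt_trans ltr01 s1) //.
have series_esum (c : int -> R) r : (forall k, 0 <= c k)%R ->
    \sum_(n <oo) `|(c (int_of_nat n))%:E| `^ r =
    \esum_(k in [set: int]) (c k `^ r)%:E.
  move=> c0; rewrite esum_int; last by move=> k; rewrite lee_fin powR_ge0.
  by apply: eq_eseriesr => n _; rewrite /= ger0_norm // poweR_EFin.
rewrite (series_esum a) // (series_esum z) //.
rewrite (series_esum (fun k => a k * z k)%R) ?invr1 ?poweRe1; last 2 first.
- by apply: esum_ge0 => k _; rewrite lee_fin powR_ge0.
- by move=> k; rewrite mulr_ge0.
by under eq_esum do rewrite powRr1 ?mulr_ge0 //.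
Qed.

Definition grand_seq_norm (theta q : R) (a : int -> \bar R) : \bar R :=
  ereal_sup [set ((eps `^ theta)%:E *
                  \esum_(k in [set: int]) (a k `^ (q * (1 + eps))))
                 `^ (q * (1 + eps))^-1
            | eps in [set eps : R | (0 < eps)%R]].

Lemma grand_normE (theta p q : R) (g : R -> R[i]) :
  grand_norm theta p q g = grand_seq_norm theta q (blocknorm p%:E g).
Proof. by []. Qed.

Lemma grand_seq_norm_ge0 (theta q : R) (a : int -> \bar R) :
  0 <= grand_seq_norm theta q a.
Proof.
rewrite /grand_seq_norm; set S := (X in ereal_sup X).
have [x [Sx x0]] : exists x, S x /\ 0 <= x.
  eexists; split; first by exists 1%R; [exact: ltr01 | reflexivity].
  exact: poweR_ge0.
exact: le_trans x0 (ereal_sup_ubound Sx).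
Qed.

Lemma small_inner_ge0 (theta q : R) (z : int -> R) :
  0 <= small_inner theta q z.
Proof.
apply/ereal_infP => _ [eps _ <-].
by rewrite mule_ge0 // ?lee_fin ?powR_ge0 // poweR_ge0.
Qed.

Lemma small_decomp_nonempty (y : int -> R) : exists D, small_decomp y D.
Proof.
exists (fun k j => if j == 0%Z then `|y k| else 0)%R; split.
  by move=> k j; case: ifP.
move=> k; rewrite (esumID [set 0%Z]); last first.
  by move=> j _; case: ifP; rewrite lee_fin.
by rewrite setTI esum_set1 ?eqxx // esum1 ?adde0 // => j [_ /eqP /negbTE ->].
Qed.

Lemma esum_hoelder_weighted (theta eps s : R) (a z : int -> R) :
  (0 < eps)%R -> (1 < s)%R ->
  (forall k, 0 <= a k)%R -> (forall k, 0 <= z k)%R ->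
  \esum_(k in [set: int]) ((a k)%:E * (z k)%:E) <=
  ((eps `^ theta)%:E * \esum_(k in [set: int]) ((a k)%:E `^ s)) `^ s^-1 *
  ((eps `^ (- theta / s))%:E *
   (\esum_(k in [set: int]) ((z k `^ conjR s)%:E)) `^ (conjR s)^-1).
Proof.
move=> eps0 s1 a0 z0.
set c := (eps `^ (theta * s^-1))%R.
have c0 : (0 < c)%R by exact: powR_gt0.
have weight_cancel : (eps `^ (- theta / s) = c^-1)%R by rewrite mulNr powRN.
under eq_esum do rewrite -EFinM.
under [in X in _ <= X]eq_esum do rewrite poweR_EFin.
rewrite weight_cancel poweRM ?lee_fin ?powR_ge0 //; last first.
  by apply: esum_ge0 => k _; rewrite lee_fin powR_ge0.
rewrite poweR_EFin -powRrM -/c muleACA -EFinM mulfV ?gt_eqF // mul1e.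
by apply: esum_hoelder.
Qed.

Lemma esum_mul_le_grand_small_inner (theta q : R) (a : int -> \bar R)
    (z : int -> R) :
  (1 <= q)%R -> (forall k, 0 <= a k) -> (forall k, a k < +oo) ->
  (forall k, 0 <= z k)%R -> grand_seq_norm theta q a < +oo ->
  \esum_(k in [set: int]) (a k * (z k)%:E) <=
  grand_seq_norm theta q a * small_inner theta q z.
Proof.
move=> q1 a0 afin z0 Gfin.
apply: le_mul_ereal_inf => //; first exact: grand_seq_norm_ge0.
  by eexists; exists 1%R; [exact: ltr01 | reflexivity].
move=> _ [eps /= eps0 <-].
have s1 : (1 < q * (1 + eps))%R.
  by rewrite (le_lt_trans q1) // ltr_pMr ?ltrDl // (lt_le_trans ltr01 q1).
have [a' a'0 aE] :
    exists2 a' : int -> R, (forall k, 0 <= a' k)%R & a = EFin \o a'.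
  exists (fine \o a) => [k|]; first exact: fine_ge0.
  by apply/funext => k; rewrite /= fineK // ge0_fin_numE.
rewrite aE.
apply: le_trans (esum_hoelder_weighted theta eps0 s1 a'0 z0) _.
apply: lee_wpmul2r; first by rewrite mule_ge0 ?lee_fin ?powR_ge0 // poweR_ge0.
by apply: ereal_sup_ubound; exists eps.
Qed.

Lemma grand_small_hoelder (theta q : R) (a : int -> \bar R) (b : int -> R) :
  (1 <= q)%R -> (forall k, 0 <= a k) -> (forall k, a k < +oo) ->
  grand_seq_norm theta q a < +oo ->
  \esum_(k in [set: int]) (a k * `|b k|%:E) <=
  grand_seq_norm theta q a * small_norm theta q b.
Proof.
move=> q1 a0 afin Gfin; set G := grand_seq_norm theta q a in Gfin *.
have G0 : 0 <= G by exact: grand_seq_norm_ge0.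
have aE k : (fine (a k))%:E = a k by rewrite fineK // ge0_fin_numE.
apply: le_mul_ereal_inf => //.
  by have [D hD] := small_decomp_nonempty b; eexists; exists D.
move=> _ [D [D0 Dsum] <-].
have split_b : \esum_(k in [set: int]) (a k * `|b k|%:E) =
    \esum_(j in [set: int]) \esum_(k in [set: int]) (a k * (D k j)%:E).
  rewrite -esum_swap; last by move=> k j; rewrite mule_ge0 // lee_fin.
  apply: eq_esum => k _; rewrite -Dsum -aE esumZl ?fine_ge0 //.
  by move=> j; rewrite lee_fin.
have Gfin' : G \is a fin_num by rewrite ge0_fin_numE.
rewrite split_b -(fineK Gfin') -esumZl ?fine_ge0 //; last first.
  by move=> j; exact: small_inner_ge0.
apply: le_esum => j _; rewrite fineK //.
exact: esum_mul_le_grand_small_inner.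
Qed.

End grand_small_hoelder.

Theorem theorem3p8 (R : realType) (theta p q : R) (g f : R -> R[i]) :
  0 < theta -> 1 <= p -> 1 <= q ->
  in_grand theta p q g ->
  in_small theta q (conj_exp p) f ->
  [/\ cmeasurable (fun x => g x * f x),
      (lebL R).-integrable [set: LebR R]
         (fun x : LebR R => (cabs (g x * f x))%:E)
    & (\int[lebL R]_(x in [set: LebR R]) (cabs (g x * f x))%:E
       <= grand_norm theta p q g * small_Lnorm theta q (conj_exp p) f)%E].
Proof.
(* The inequality does not use [0 < theta]. *)
move=> _ p1 q1 [mg gfin Gfin] [mf ffin Nfin].
have mgf := cmeasurableM mg mf.
have m_integrand : measurable_fun [set: LebR R]
    (fun x : LebR R => (cabs (g x * f x))%:E).
  exact/measurable_EFinP/measurable_cabs.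
have bound : (\int[lebL R]_(x in [set: LebR R]) (cabs (g x * f x))%:E <=
    grand_norm theta p q g * small_Lnorm theta q (conj_exp p) f)%E.
  rewrite integral_sum_Ik //; last by move=> x; rewrite lee_fin cabs_ge0.
  rewrite grand_normE /small_Lnorm.
  apply: le_trans (grand_small_hoelder _ q1 _ gfin Gfin); last first.
    by move=> k; exact: Lnorm_ge0.
  apply: le_esum => k _; rewrite ger0_norm ?fine_ge0 ?Lnorm_ge0 // fineK.
    exact: integral_Ik_le_blocknorm.
  by rewrite ge0_fin_numE ?Lnorm_ge0.
split => //; apply/integrableP; split => //.
under eq_integral do rewrite gee0_abs ?lee_fin ?cabs_ge0 //.
have G0 : (0 <= grand_norm theta p q g)%E.
  by rewrite grand_normE grand_seq_norm_ge0.
apply: le_lt_trans bound _; apply: lte_mul_pinfty => //.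
by rewrite ge0_fin_numE.
Qed.
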